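(* Let $1\le p<\infty$, $X=\ell_p(\mathbb Z_+)$, and let $\mathbf u,\mathbf v$ be bounded sequences of non-zero scalars with $\inf_{n\ge1}|u_n|>0$ and $\inf_{n\ge1}|v_n|>0$. If the weighted backward shifts $B_{\mathbf u}$ and $B_{\mathbf v}$ are not similar, then they are orthogonal.
   Context: $(e_n)_{n\ge0}$ is the canonical basis of $\ell_p(\mathbb Z_+)$ (real or complex); $B_{\mathbf w}e_0=0$, $B_{\mathbf w}e_n=w_ne_{n-1}$. Operators $T_1,T_2$ are similar if $T_1=JT_2J^{-1}$ for some invertible bounded operator $J$ on $X$. They are orthogonal if any $T_1$-invariant and $T_2$-invariant Borel probability measures $m_1,m_2$ with $m_1(\{0\})=0=m_2(\{0\})$ are mutually singular. *)

From HB Require Import structures.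
From mathcomp Require Import all_boot all_order all_algebra.
From mathcomp Require Import all_classical all_reals all_analysis.
From mathcomp Require Import complex.
Set Implicit Arguments. Unset Strict Implicit. Unset Printing Implicit Defensive.
Import Order.TTheory GRing.Theory Num.Theory.
Local Open Scope ring_scope.
Local Open Scope classical_set_scope.

Definition scal (R : realType) (cplx : bool) : numFieldType :=
  if cplx then (R[i] : numFieldType) else (R : numFieldType).

Definition snorm (R : realType) (cplx : bool) : scal R cplx -> R :=
  match cplx return scal R cplx -> R with
  | true => fun z : R[i] => Num.sqrt (complex.Re z ^+ 2 + complex.Im z ^+ 2)
  | false => fun x : R => `|x|
  end.

Section Lp.
Variables (R : realType) (cplx : bool) (p : R).
Local Notation K := (scal R cplx).

Definition pw (t : R) : R := if t == 0 then 0 else t `^ p.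

Definition lpsum (x : nat -> K) : \bar R :=
  (\sum_(n <oo) (pw (snorm (x n)))%:E)%E.

Definition in_lp (x : nat -> K) : Prop := (lpsum x < +oo)%E.

Definition lpnorm (x : nat -> K) : R := fine (lpsum x) `^ p^-1.

Record lp := LP { lpseq : nat -> K; lpseqP : in_lp lpseq }.

Lemma in_lp0 : in_lp (fun _ => 0).
Proof.
rewrite /in_lp /lpsum eseries0 ?ltry // => n _ _.
have -> : snorm (0 : K) = 0.
  by case: cplx => /=; rewrite ?normr0 // expr0n /= addr0 sqrtr0.
by rewrite /pw eqxx.
Qed.

HB.instance Definition _ := gen_eqMixin lp.
HB.instance Definition _ := gen_choiceMixin lp.
HB.instance Definition _ := isPointed.Build lp (LP in_lp0).

Definition lpdist (x y : lp) : R := lpnorm (fun n => lpseq x n - lpseq y n).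

Definition lp_open : set (set lp) :=
  [set A | forall x, A x -> exists2 e : R, 0 < e & forall y, lpdist x y < e -> A y].

Definition lpBorel := g_sigma_algebraType lp_open.

Definition borel_prob := probability lpBorel R.

Definition invariant (T : lp -> lp) (m : borel_prob) : Prop :=
  forall A : set lpBorel, measurable A -> m (T @^-1` A) = m A.

Definition no_atom_at_0 (m : borel_prob) : Prop :=
  m [set x : lpBorel | forall n, lpseq x n = 0] = 0%E.

Definition mutually_singular (m1 m2 : borel_prob) : Prop :=
  exists2 A : set lpBorel, measurable A & m1 A = 0%E /\ m2 (~` A) = 0%E.

Definition ops_orthogonal (T1 T2 : lp -> lp) : Prop :=
  forall m1 m2 : borel_prob, invariant T1 m1 -> invariant T2 m2 ->
    no_atom_at_0 m1 -> no_atom_at_0 m2 -> mutually_singular m1 m2.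

Definition linear_op (J : lp -> lp) : Prop :=
  forall (a : K) (x y z : lp),
    (forall n, lpseq z n = a * lpseq x n + lpseq y n) ->
    forall n, lpseq (J z) n = a * lpseq (J x) n + lpseq (J y) n.

Definition bounded_op (J : lp -> lp) : Prop :=
  linear_op J /\ exists C : R, forall x, lpnorm (lpseq (J x)) <= C * lpnorm (lpseq x).

Definition ops_similar (T1 T2 : lp -> lp) : Prop :=
  exists J Jinv : lp -> lp, [/\ bounded_op J, bounded_op Jinv,
    cancel J Jinv, cancel Jinv J & forall x, T1 x = J (T2 (Jinv x))].

(* T is the weighted backward shift B_w : e_0 |-> 0, e_n |-> w_n e_(n-1),
   i.e. (B_w x)_n = w_(n+1) x_(n+1) *)
Definition is_wshift (w : nat -> K) (T : lp -> lp) : Prop :=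
  forall x n, lpseq (T x) n = w n.+1 * lpseq x n.+1.

End Lp.

From Pilot Require Import Defs.
From HB Require Import structures.
From mathcomp Require Import all_boot all_order all_algebra.
From mathcomp Require Import all_classical all_reals all_analysis.
From mathcomp Require Import complex.
From mathcomp Require Import ring lra.
Import Order.TTheory GRing.Theory Num.Theory.
Set Implicit Arguments. Unset Strict Implicit. Unset Printing Implicit Defensive.
Local Open Scope ring_scope.
Local Open Scope classical_set_scope.

(* Write U_n = |u_1 ... u_n| and V_n = |v_1 ... v_n|.  If U_n / V_n is bounded
   above and below, the diagonal operator e_n |-> (v_1 ... v_n / u_1 ... u_n) e_n
   is invertible and conjugates B_v into B_u.  Otherwise, say, inf_n U_n / V_n = 0;
   shifting the products by k <= j changes them by a factor at most (M/c)^j, so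
   |u_(k+1) ... u_(k+n)| <= e |v_(k+1) ... v_(k+n)| for all k <= j at once, for
   some n.  Let Ball_j(r) be the set of x with |x_k| <= r for k <= j.  The
   probability m_2 gives mass < 2^-(j+1) to the complement of some Ball_j(t_j);
   taking e = 1/((j+1) t_j), the complement of E_j := B_u^-n_j (Ball_j(1/(j+1)))
   lies in B_v^-n_j of that complement, so m_2(E_j^c) < 2^-(j+1) by invariance,
   while m_1(E_j) = m_1(Ball_j(1/(j+1))) -> m_1({0}) = 0.  By Borel-Cantelli,
   lim inf E_j separates m_1 from m_2. *)

Section scalar_norm.
Variables (R : realType) (cplx : bool).
Local Notation K := (scal R cplx).

Lemma snormC (z : R[i]) : (snorm (cplx := true) z)%:C%C = `|z|.
Proof. by rewrite normc_def. Qed.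

Lemma snorm_ge0 (a : K) : 0 <= snorm a.
Proof. by case: cplx a => /= a; rewrite ?normr_ge0 ?sqrtr_ge0. Qed.

Lemma snormM (a b : K) : snorm (a * b) = snorm a * snorm b.
Proof.
case: cplx a b => /= a b; last exact: normrM.
by apply/complexI; rewrite rmorphM /= !snormC normrM.
Qed.

Lemma snorm1 : snorm (1 : K) = 1.
Proof. by case: cplx => /=; rewrite ?normr1 // expr0n expr1n /= addr0 sqrtr1. Qed.

Lemma snormN (a : K) : snorm (- a) = snorm a.
Proof.
case: cplx a => /= a; last exact: normrN.
by apply/complexI; rewrite !snormC normrN.
Qed.

Lemma snormD (a b : K) : snorm (a + b) <= snorm a + snorm b.
Proof.
case: cplx a b => /= a b; last exact: ler_normD.
by rewrite -lecR rmorphD /= !snormC ler_normD.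
Qed.

Lemma snorm_eq0 (a : K) : (snorm a == 0) = (a == 0).
Proof.
case: cplx a => /= a; last exact: normr_eq0.
by rewrite -[a == 0]normr_eq0 -snormC (inj_eq (@complexI R)).
Qed.

Lemma snorm0 : snorm (0 : K) = 0.
Proof. by apply/eqP; rewrite snorm_eq0. Qed.

Lemma snormV (a : K) : snorm a^-1 = (snorm a)^-1.
Proof.
have [->|a0] := eqVneq a 0; first by rewrite invr0 snorm0 invr0.
have sa0 : snorm a != 0 by rewrite snorm_eq0.
by apply: (mulfI sa0); rewrite -snormM !mulfV // snorm1.
Qed.

Lemma snorm_prod (I : Type) (r : seq I) (P : pred I) (F : I -> K) :
  snorm (\prod_(i <- r | P i) F i) = \prod_(i <- r | P i) snorm (F i).
Proof. exact: (big_morph _ snormM snorm1). Qed.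

End scalar_norm.

Section lp_space.
Variables (R : realType) (cplx : bool) (p : R).
Hypothesis p_gt0 : 0 < p.
Local Notation K := (scal R cplx).

Let p_neq0 : p != 0. Proof. exact: lt0r_neq0. Qed.

Lemma pwE (t : R) : pw p t = t `^ p.
Proof. by rewrite /pw; case: eqP => // ->; rewrite powR0. Qed.

Lemma pw_ge0 (t : R) : 0 <= pw p t.
Proof. by rewrite /pw; case: ifP => // _; exact: powR_ge0. Qed.

Lemma pw_le (s t : R) : 0 <= s -> s <= t -> pw p s <= pw p t.
Proof.
move=> s0 st; rewrite !pwE ge0_ler_powR ?nnegrE ?(ltW p_gt0) //.
exact: le_trans st.
Qed.

Lemma pwM (s t : R) : 0 <= s -> 0 <= t -> pw p (s * t) = pw p s * pw p t.
Proof. by move=> s0 t0; rewrite !pwE powRM. Qed.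

Lemma pwK (t : R) : 0 <= t -> pw p t `^ p^-1 = t.
Proof. by move=> t0; rewrite pwE -powRrM mulfV // powRr1. Qed.

Lemma lpsum_ge0 (x : nat -> K) : (0 <= lpsum p x)%E.
Proof. by apply: nneseries_ge0 => n _ _; rewrite lee_fin pw_ge0. Qed.

Lemma in_lp_fin_num (x : nat -> K) : in_lp p x -> lpsum p x \is a fin_num.
Proof. by rewrite ge0_fin_numE // lpsum_ge0. Qed.

Lemma pw_le_lpsum (x : nat -> K) k : ((pw p (snorm (x k)))%:E <= lpsum p x)%E.
Proof.
apply: le_trans (nneseries_lim_ge k.+1 _) => [|n _ _]; last by rewrite lee_fin pw_ge0.
by rewrite big_nat_recr //= leeDr // sume_ge0 // => i _; rewrite lee_fin pw_ge0.
Qed.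

Lemma snorm_le_lpnorm (x : nat -> K) k : in_lp p x -> snorm (x k) <= lpnorm p x.
Proof.
move=> /in_lp_fin_num/fineK xfin.
rewrite /lpnorm -(pwK (snorm_ge0 (x k))) ge0_ler_powR ?nnegrE ?invr_ge0 ?(ltW p_gt0) //.
- exact: pw_ge0.
- by rewrite fine_ge0 ?lpsum_ge0.
- by rewrite -lee_fin xfin pw_le_lpsum.
Qed.

Lemma pw_snormB (a b : K) :
  pw p (snorm (a - b)) <= 2 `^ p * (pw p (snorm a) + pw p (snorm b)).
Proof.
have [sa sb] := (snorm_ge0 a, snorm_ge0 b).
have le_ab : snorm (a - b) <= 2 * Num.max (snorm a) (snorm b).
  apply: le_trans (snormD a (- b)) _; rewrite snormN mulr2n mulrDl mul1r.
  by apply: lerD; rewrite le_max lexx ?orbT.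
apply: le_trans (pw_le (snorm_ge0 _) le_ab) _.
rewrite pwM ?le_max ?sa // pwE ler_wpM2l ?powR_ge0 //.
by case: (leP (snorm a) (snorm b)) => _; rewrite ?lerDr ?lerDl pw_ge0.
Qed.

Lemma in_lpB (x y : nat -> K) : in_lp p x -> in_lp p y -> in_lp p (fun n => x n - y n).
Proof.
move=> /in_lp_fin_num/fineK xfin /in_lp_fin_num/fineK yfin.
rewrite /in_lp /lpsum.
apply: le_lt_trans (lee_nneseries (v := fun n => ((2 `^ p)%:E *
   ((pw p (snorm (x n)))%:E + (pw p (snorm (y n)))%:E))%E) _ _) _.
- by move=> n _ _; rewrite lee_fin pw_ge0.
- by move=> n _; rewrite -EFinD -EFinM lee_fin pw_snormB.
rewrite nneseriesZl; last by move=> n _; rewrite adde_ge0 // lee_fin pw_ge0.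
rewrite nneseriesD; try by move=> n _ _; rewrite lee_fin pw_ge0.
by rewrite -[X in (_ * (X + _))%E]xfin -[X in (_ * (_ + X))%E]yfin -EFinD -EFinM ltry.
Qed.

Lemma snorm_le_lpdist (x y : lp cplx p) k :
  snorm (lpseq x k - lpseq y k) <= lpdist x y.
Proof. by apply: snorm_le_lpnorm; apply: in_lpB; apply: lpseqP. Qed.

End lp_space.

Section coordinate_sets.
Variables (R : realType) (cplx : bool) (p : R).
Hypothesis p_gt0 : 0 < p.
Local Notation K := (scal R cplx).
Local Notation X := (lpBorel cplx p).

Lemma lp_open_snorm_gt k c : lp_open [set x : lp cplx p | c < snorm (lpseq x k)].
Proof.
move=> x /= cx; exists (snorm (lpseq x k) - c); first by rewrite subr_gt0.
move=> y xy; have := snorm_le_lpdist p_gt0 x y k.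
have := snormD (lpseq x k - lpseq y k) (lpseq y k); rewrite subrK; lra.
Qed.

Lemma measurable_snorm_le k c : measurable [set x : X | snorm (lpseq x k) <= c].
Proof.
rewrite (_ : [set x | _] = ~` [set x : X | c < snorm (lpseq x k)]).
  by apply: measurableC; apply: sub_gen_smallest; exact: lp_open_snorm_gt.
by rewrite predeqE => x /=; rewrite leNgt; split => /negP.
Qed.

Lemma measurable_snormM_le (a : K) k c : measurable [set x : X | snorm (a * lpseq x k) <= c].
Proof.
have [->|a0] := eqVneq a 0.
  have [c0|c0] := boolP (0 <= c).
    by rewrite (_ : [set x | _] = setT) // predeqE => x /=; rewrite mul0r snorm0.
  by rewrite (_ : [set x | _] = set0) // predeqE => x /=; rewrite mul0r snorm0 (negbTE c0).
have sa : 0 < snorm a by rewrite lt_def snorm_eq0 a0 snorm_ge0.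
rewrite (_ : [set x | _] = [set x : X | snorm (lpseq x k) <= c / snorm a]).
  exact: measurable_snorm_le.
by rewrite predeqE => x /=; rewrite snormM ler_pdivlMr // mulrC.
Qed.

Definition coord_ball j t : set X :=
  [set x | forall k, (k <= j)%N -> snorm (lpseq x k) <= t].

Lemma measurable_coord_ball j t : measurable (coord_ball j t).
Proof.
rewrite (_ : coord_ball j t =
  \bigcap_(k in [set k | (k <= j)%N]) [set x | snorm (lpseq x k) <= t]); last by rewrite predeqE.
by apply: bigcap_measurable => [|k _]; [exists 0%N | exact: measurable_snorm_le].
Qed.

End coordinate_sets.

Lemma lp_ext (R : realType) (cplx : bool) (p : R) (x y : lp cplx p) :
  (forall n, lpseq x n = lpseq y n) -> x = y.
Proof.
case: x y => [fx hx] [fy hy] /= /funext exy; subst fy.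
by congr LP; exact: Prop_irrelevance.
Qed.

Section diagonal_operator.
Variables (R : realType) (cplx : bool) (p : R).
Hypothesis p_gt0 : 0 < p.
Local Notation K := (scal R cplx).
Variables (e : nat -> K) (L : R).
Hypothesis e_le : forall n, snorm (e n) <= L.

Lemma lpsum_diag (x : nat -> K) :
  (lpsum p (fun n => (e n * x n)%R) <= (pw p L)%:E * lpsum p x)%E.
Proof.
rewrite /lpsum -nneseriesZl; last by move=> n _; rewrite lee_fin pw_ge0.
apply: lee_nneseries => [n _ _|n _]; first by rewrite lee_fin pw_ge0.
rewrite -EFinM lee_fin snormM pwM ?snorm_ge0 // ler_wpM2r ?pw_ge0 //.
by apply: pw_le; rewrite ?snorm_ge0.
Qed.

Lemma in_lp_diag (x : nat -> K) : in_lp p x -> in_lp p (fun n => e n * x n).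
Proof.
move=> /in_lp_fin_num/fineK xfin; apply: le_lt_trans (lpsum_diag x) _.
by rewrite -xfin -EFinM ltry.
Qed.

Definition diag_op (x : lp cplx p) : lp cplx p := LP (in_lp_diag (lpseqP x)).

Lemma diag_op_bounded : bounded_op diag_op.
Proof.
split=> [a x y z zE n /=|]; first by rewrite zE mulrDr mulrCA.
exists L => x; rewrite /lpnorm /=.
have L0 : 0 <= L := le_trans (snorm_ge0 _) (e_le 0).
have /in_lp_fin_num/fineK xfin := lpseqP x.
have /in_lp_fin_num/fineK exfin := in_lp_diag (lpseqP x).
have s0 := fine_ge0 (lpsum_ge0 p (lpseq x)).
have les : fine (lpsum p (fun n => e n * lpseq x n)) <= pw p L * fine (lpsum p (lpseq x)).
  by rewrite -lee_fin EFinM exfin xfin lpsum_diag.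
apply: le_trans (ge0_ler_powR _ _ _ les) _;
  rewrite ?nnegrE ?invr_ge0 ?(ltW p_gt0) ?fine_ge0 ?lpsum_ge0 ?mulr_ge0 ?pw_ge0 //.
by rewrite powRM ?pw_ge0 // pwK.
Qed.

End diagonal_operator.

Section weight_products.
Variable S : pzSemiRingType.
Implicit Types w : nat -> S.

Definition wprod w k n : S := \prod_(i < n) w (k + i).+1.

Lemma wprodD w m k n : wprod w m (k + n) = wprod w m k * wprod w (m + k) n.
Proof. by rewrite /wprod big_split_ord; congr (_ * _); apply: eq_bigr => i _; rewrite addnA. Qed.

Lemma wprod_shift w k n : wprod w 0 k * wprod w k n = wprod w 0 n * wprod w n k.
Proof. by rewrite -[k in wprod w k n]add0n -[n in wprod w n k]add0n -!wprodD addnC. Qed.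

Lemma wprodSl w k n : wprod w k n.+1 = w k.+1 * wprod w k.+1 n.
Proof. by rewrite /wprod big_ord_recl addn0; congr (_ * _); apply: eq_bigr => i _; rewrite addSnnS. Qed.

Lemma wprodSr w k n : wprod w k n.+1 = wprod w k n * w (k + n).+1.
Proof. by rewrite /wprod big_ord_recr. Qed.

End weight_products.

Lemma wprod_neq0 (F : idomainType) (w : nat -> F) k n :
  (forall i, (0 < i)%N -> w i != 0) -> wprod w k n != 0.
Proof. by move=> w_neq0; rewrite /wprod prodf_seq_neq0; apply/allP => i _; exact: w_neq0. Qed.

Lemma snorm_wprod (R : realType) (cplx : bool) (w : nat -> scal R cplx) k n :
  snorm (wprod w k n) = wprod (fun i => snorm (w i)) k n.
Proof. exact: snorm_prod. Qed.

Section weighted_shift.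
Variables (R : realType) (cplx : bool) (p : R).
Hypothesis p_gt0 : 0 < p.
Local Notation K := (scal R cplx).
Local Notation X := (lpBorel cplx p).
Variables (w : nat -> K) (B : lp cplx p -> lp cplx p).
Hypothesis wshiftB : is_wshift w B.

Lemma iter_wshift x n k : lpseq (iter n B x) k = wprod w k n * lpseq x (k + n).
Proof.
elim: n k => [|n IH] k; first by rewrite /wprod big_ord0 mul1r addn0.
by rewrite iterS wshiftB IH wprodSl mulrA addSnnS.
Qed.

Lemma measurable_iter_coord_ball n j t : measurable (iter n B @^-1` coord_ball j t : set X).
Proof.
rewrite (_ : _ @^-1` _ = \bigcap_(k in [set k | (k <= j)%N])
  [set x : X | snorm (wprod w k n * lpseq x (k + n)) <= t]).
  by apply: bigcap_measurable => [|k _]; [exists 0%N | exact: measurable_snormM_le].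
by rewrite predeqE => x; split => h k /h; rewrite /= iter_wshift.
Qed.

End weighted_shift.

(* [inf_n A n / B n = 0], stated without division. *)
Definition inf_ratio_eq0 (R : numDomainType) (A B : nat -> R) : Prop :=
  forall e, 0 < e -> exists n, A n <= e * B n.

Section weight_product_bounds.
Variables (R : realFieldType) (a : nat -> R) (c M : R).
Hypotheses (c_gt0 : 0 < c) (c_le : forall i, (0 < i)%N -> c <= a i)
  (le_M : forall i, (0 < i)%N -> a i <= M).

Lemma wprod_ge_expr k n : c ^+ n <= wprod a k n.
Proof.
rewrite -[n in c ^+ n]card_ord -prodr_const.
by apply: ler_prod => i _; rewrite (ltW c_gt0) c_le.
Qed.

Lemma wprod_gt0 k n : 0 < wprod a k n.
Proof. exact: lt_le_trans (exprn_gt0 _ c_gt0) (wprod_ge_expr k n). Qed.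

Lemma wprod_ge0 k n : 0 <= wprod a k n.
Proof. exact/ltW/wprod_gt0. Qed.

Lemma wprod_le_expr k n : wprod a k n <= M ^+ n.
Proof.
rewrite -[n in M ^+ n]card_ord -prodr_const.
by apply: ler_prod => i _; rewrite le_M // (le_trans (ltW c_gt0)) ?c_le.
Qed.

Lemma wprod_shift_le k n : wprod a k n <= (M / c) ^+ k * wprod a 0 n.
Proof.
rewrite expr_div_n mulrAC ler_pdivlMr ?exprn_gt0 //.
apply: le_trans (_ : _ <= wprod a 0 k * wprod a k n) _.
  by rewrite mulrC ler_wpM2r ?wprod_ge0 ?wprod_ge_expr.
by rewrite wprod_shift mulrC ler_wpM2r ?wprod_ge0 ?wprod_le_expr.
Qed.

Lemma wprod_shift_ge k n : wprod a 0 n <= (M / c) ^+ k * wprod a k n.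
Proof.
rewrite expr_div_n mulrAC ler_pdivlMr ?exprn_gt0 //.
apply: le_trans (_ : _ <= wprod a 0 n * wprod a n k) _.
  by rewrite ler_wpM2l ?wprod_ge0 ?wprod_ge_expr.
by rewrite -wprod_shift ler_wpM2r ?wprod_ge0 ?wprod_le_expr.
Qed.

Lemma ratio_ge1 : 1 <= M / c.
Proof. by rewrite ler_pdivlMr // mul1r (le_trans (@c_le 1%N isT)) ?le_M. Qed.

End weight_product_bounds.

Lemma wprod_ratio_uniform (R : realFieldType) (a b : nat -> R) ca Ma cb Mb :
  0 < ca -> (forall i, (0 < i)%N -> ca <= a i) -> (forall i, (0 < i)%N -> a i <= Ma) ->
  0 < cb -> (forall i, (0 < i)%N -> cb <= b i) -> (forall i, (0 < i)%N -> b i <= Mb) ->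
  inf_ratio_eq0 (wprod a 0) (wprod b 0) ->
  forall j e, 0 < e -> exists n, forall k, (k <= j)%N -> wprod a k n <= e * wprod b k n.
Proof.
move=> ca0 ca_le le_Ma cb0 cb_le le_Mb ab0 j e e0.
have [a1 b1] := (ratio_ge1 ca0 ca_le le_Ma, ratio_ge1 cb0 cb_le le_Mb).
set E := Ma / ca * (Mb / cb).
have E1 : 1 <= E by rewrite mulr_ege1.
have Ej0 : 0 < E ^+ j by rewrite exprn_gt0 // (lt_le_trans ltr01).
have [n le_n] := ab0 (e / E ^+ j) (divr_gt0 e0 Ej0).
exists n => k kj.
have ak0 : 0 <= (Ma / ca) ^+ k by rewrite exprn_ge0 // (le_trans ler01).
apply: le_trans (wprod_shift_le ca0 ca_le le_Ma k n) _.
apply: le_trans (ler_wpM2l ak0 le_n) _.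
apply: le_trans (ler_wpM2l ak0 (ler_wpM2l _ (wprod_shift_ge cb0 cb_le le_Mb k n))) _.
  by rewrite divr_ge0 ?ltW.
have -> : (Ma / ca) ^+ k * (e / E ^+ j * ((Mb / cb) ^+ k * wprod b k n)) =
    e * wprod b k n * (E ^+ k / E ^+ j) by rewrite [E ^+ k]exprMn; ring.
apply: ler_piMr; first by rewrite mulr_ge0 ?(ltW e0) ?(wprod_ge0 cb0 cb_le).
by rewrite ler_pdivrMr // mul1r ler_weXn2l.
Qed.

Lemma not_inf_ratio_eq0 (R : realDomainType) (A B : nat -> R) :
  ~ inf_ratio_eq0 A B -> exists2 c, 0 < c & forall n, c * B n <= A n.
Proof.
move=> /existsNP[c /not_implyP[c0 /forallNP Bc]]; exists c => // n.
by rewrite ltW // ltNge; apply/negP; exact: Bc.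
Qed.

Section measure_lemmas.
Context d (T : measurableType d) (R : realType).
Local Open Scope ereal_scope.

Lemma probability_nonincreasing_cvg (P : probability T R) (F : (set T)^nat) :
  (forall n, measurable (F n)) -> nonincreasing_seq F -> P \o F @ \oo --> P (\bigcap_n F n).
Proof.
move=> mF F_dec; apply: nonincreasing_cvg_mu => //; last exact: bigcapT_measurable.
by rewrite (le_lt_trans (probability_le1 _ (mF 0%N))) ?ltry.
Qed.

Lemma cvge0_lt (f : nat -> \bar R) (e : R) : (0 < e)%R -> f @ \oo --> 0 ->
  exists n, f n < e%:E.
Proof.
move=> e0 /(_ _ (nbhs_open_ereal_lt (f := fun=> e) e0))[n _ fn].
by exists n; apply: fn => /=.
Qed.

Lemma singular_of_liminf (mu1 mu2 : {measure set T -> \bar R}) (E : (set T)^nat) :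
  (forall j, measurable (E j)) -> mu1 \o E @ \oo --> 0 ->
  \sum_(j <oo) mu2 (~` E j) < +oo ->
  exists2 A, measurable A & mu1 A = 0 /\ mu2 (~` A) = 0.
Proof.
move=> mE mu1E mu2E.
have mtail n : measurable (\bigcap_(j in [set j | (n <= j)%N]) E j).
  by apply: bigcap_measurable => [|j _]; [exists n => /= | exact: mE].
exists (\bigcup_n \bigcap_(j in [set j | (n <= j)%N]) E j).
  exact: bigcupT_measurable.
split; last first.
  rewrite setC_bigcup (_ : \bigcap_n _ = lim_sup_set (fun j => ~` E j)).
    by apply: lim_sup_set_cvg0 => // j; exact: measurableC.
  by apply: eq_bigcapr => n _; rewrite setC_bigcap.
have tail0 n : mu1 (\bigcap_(j in [set j | (n <= j)%N]) E j) = 0.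
  apply/eqP; rewrite eq_le measure_ge0 andbT -(cvg_lim _ mu1E) //.
  apply: lime_ge; first by apply/cvg_ex; exists 0.
  exists n => // j /= nj; apply: le_measure; rewrite ?inE //.
  exact: bigcap_inf.
apply/eqP; rewrite eq_le measure_ge0 andbT.
apply: le_trans (measure_sigma_subadditive mu1 mtail (bigcupT_measurable _ mtail) (@subset_refl _ _)) _.
by rewrite eseries0 // => n _ _; rewrite tail0.
Qed.

End measure_lemmas.

Lemma mutually_singular_sym (R : realType) (cplx : bool) (p : R) (m1 m2 : borel_prob cplx p) :
  mutually_singular m1 m2 -> mutually_singular m2 m1.
Proof. by case=> A mA [m1A m2A]; exists (~` A); rewrite ?setCK //; exact: measurableC. Qed.

Lemma invariant_iter (R : realType) (cplx : bool) (p : R) (B : lp cplx p -> lp cplx p)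
    (m : borel_prob cplx p) (A : set (lpBorel cplx p)) :
  Defs.invariant B m -> (forall n, measurable (iter n B @^-1` A : set (lpBorel cplx p))) ->
  forall n, m (iter n B @^-1` A) = m A.
Proof.
move=> Binv mA; elim=> [//|n IH].
have -> : iter n.+1 B @^-1` A = B @^-1` (iter n B @^-1` A).
  by rewrite predeqE => x; rewrite /preimage /= -iterSr.
by rewrite Binv.
Qed.

Section coord_balls.
Variables (R : realType) (cplx : bool) (p : R).
Hypothesis p_gt0 : 0 < p.
Local Notation X := (lpBorel cplx p).

Lemma coord_ball_compl_small (m : borel_prob cplx p) j (e : R) : 0 < e ->
  exists t, 0 < t /\ (m (~` coord_ball j t) < e%:E)%E.
Proof.
move=> e0.
have mF N : measurable (~` coord_ball j N.+1%:R : set X).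
  by apply: measurableC; exact: measurable_coord_ball.
have F_dec : nonincreasing_seq (fun N => ~` coord_ball j N.+1%:R : set X).
  move=> N N' NN'; apply/subsetPset/subsetC => x xN k /xN/le_trans; apply.
  by rewrite ler_nat ltnS.
have F0 : \bigcap_N (~` coord_ball j N.+1%:R : set X) = set0.
  rewrite -subset0 => x /= xF.
  have [N0 _ N0x] : \forall N \near \oo, forall i : 'I_j.+1, snorm (lpseq x i) <= N%:R.
    by apply: filter_forall => i; exact: nbhs_infty_ger.
  by apply: (xF N0 I) => k kj; apply: le_trans (N0x N0.+1 (leqnSn _) (Ordinal (kj : k < j.+1)%N)) _.
have := probability_nonincreasing_cvg (P := m) mF F_dec; rewrite F0 measure0.
by move=> /(cvge0_lt e0)[N mN]; exists N.+1%:R; rewrite ltr0Sn.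
Qed.

Lemma bigcap_coord_ball_harmonic :
  \bigcap_j coord_ball j j.+1%:R^-1 = [set x : X | forall n, lpseq x n = 0].
Proof.
rewrite predeqE => x; split=> [x0 n|x0 j _ k _]; last by rewrite x0 snorm0.
apply/eqP; rewrite -snorm_eq0 eq_le snorm_ge0 andbT leNgt; apply/negP => /ltr_add_invr[j].
rewrite add0r; apply/negP; rewrite -leNgt.
by apply: le_trans (x0 (maxn n j) I n (leq_maxl _ _)) _; rewrite lef_pV2 ?posrE // ler_nat ltnS leq_maxr.
Qed.

End coord_balls.

Section wshift_singular.
Variables (R : realType) (cplx : bool) (p : R).
Hypothesis p_gt0 : 0 < p.
Local Notation K := (scal R cplx).
Local Notation X := (lpBorel cplx p).
Variables (u v : nat -> K) (Bu Bv : lp cplx p -> lp cplx p).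
Hypotheses (wshift_u : is_wshift u Bu) (wshift_v : is_wshift v Bv).

Lemma iter_wshift_coord_ball_sub n j (r t : R) : 0 <= r -> 0 < t ->
  (forall k, (k <= j)%N -> snorm (wprod u k n) <= r / t * snorm (wprod v k n)) ->
  iter n Bv @^-1` coord_ball j t `<=` iter n Bu @^-1` coord_ball j r.
Proof.
move=> r0 t0 uv x vx k kj; rewrite /= (iter_wshift wshift_u) snormM.
have := vx k kj; rewrite /= (iter_wshift wshift_v) snormM => le_t.
apply: le_trans (ler_wpM2r (snorm_ge0 _) (uv k kj)) _.
set a := snorm (wprod v k n) in le_t *; set b := snorm (lpseq x (k + n)) in le_t *.
rewrite (_ : r / t * a * b = r * (a * b / t)); last by ring.
by apply: ler_piMr r0 _; rewrite ler_pdivrMr // mul1r.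
Qed.

Hypothesis dominated : forall j (e : R), 0 < e -> exists n, forall k, (k <= j)%N ->
  wprod (fun i => snorm (u i)) k n <= e * wprod (fun i => snorm (v i)) k n.
Variables (m1 m2 : borel_prob cplx p).
Hypotheses (m1_inv : Defs.invariant Bu m1) (m2_inv : Defs.invariant Bv m2)
  (m1_0 : no_atom_at_0 m1).

Lemma wshift_mutually_singular : mutually_singular m1 m2.
Proof.
pose r j : R := j.+1%:R^-1.
have r_gt0 j : 0 < r j by rewrite invr_gt0.
have eps_gt0 j : 0 < 1 / (2 ^ j.+1)%:R :> R by rewrite divr_gt0 // ltr0n expn_gt0.
have [t tP] := choice (fun j => coord_ball_compl_small p_gt0 m2 j (eps_gt0 j)).
have [n n_dom] := choice (fun j => dominated j (divr_gt0 (r_gt0 j) (proj1 (tP j)))).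
pose E j := iter (n j) Bu @^-1` coord_ball j (r j).
apply: (singular_of_liminf (mu1 := m1) (mu2 := m2) (E := E)).
- by move=> j; exact: measurable_iter_coord_ball.
- have -> : m1 \o E = m1 \o (fun j => coord_ball j (r j)).
    apply/funext => j /=; apply: invariant_iter m1_inv _ _ => k.
    exact: measurable_iter_coord_ball.
  rewrite -m1_0 -bigcap_coord_ball_harmonic.
  apply: probability_nonincreasing_cvg => [j|j j' jj'].
    exact: measurable_coord_ball.
  apply/subsetPset => x x_j' k kj; apply: le_trans (x_j' k (leq_trans kj jj')) _.
  by rewrite lef_pV2 ?posrE // ler_nat ltnS.
apply: le_lt_trans (_ : _ <= \sum_(j <oo) (1 / (2 ^ j.+1)%:R)%:E)%E _.
  apply: lee_nneseries => [j _ _|j _]; first exact: measure_ge0.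
  have mC : forall k, measurable (iter k Bv @^-1` (~` coord_ball j (t j)) : set X).
    by move=> k; rewrite -preimage_setC; apply: measurableC; exact: measurable_iter_coord_ball.
  apply: le_trans (ltW (proj2 (tP j))); rewrite -(invariant_iter m2_inv mC (n j)).
  apply: le_measure; rewrite ?inE; first by apply: measurableC; exact: measurable_iter_coord_ball.
    exact: mC.
  rewrite preimage_setC; apply/subsetC/iter_wshift_coord_ball_sub => [||k kj].
  - exact/ltW/r_gt0.
  - exact: (proj1 (tP j)).
  - by rewrite !snorm_wprod n_dom.
by apply: le_lt_trans (epsilon_trick0 _ ler01) _; rewrite ltry.
Qed.

End wshift_singular.

Section wshift_similar.
Variables (R : realType) (cplx : bool) (p : R).
Hypothesis p_gt0 : 0 < p.
Local Notation K := (scal R cplx).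
Variables (u v : nat -> K) (Bu Bv : lp cplx p -> lp cplx p).
Hypotheses (wshift_u : is_wshift u Bu) (wshift_v : is_wshift v Bv).
Hypotheses (u_neq0 : forall i, (0 < i)%N -> u i != 0) (v_neq0 : forall i, (0 < i)%N -> v i != 0).
Variables (c1 c2 : R).
Hypotheses (c1_gt0 : 0 < c1) (c2_gt0 : 0 < c2).
Hypothesis le_vu : forall n, c1 * wprod (fun i => snorm (v i)) 0 n <= wprod (fun i => snorm (u i)) 0 n.
Hypothesis le_uv : forall n, c2 * wprod (fun i => snorm (u i)) 0 n <= wprod (fun i => snorm (v i)) 0 n.

Let diag_conj_identity (F : fieldType) (a b s t y : F) : a != 0 -> b != 0 -> t != 0 ->
  b / a * (t * (a * s / (b * t) * y)) = s * y.
Proof. by move=> a0 b0 t0; field; rewrite a0 b0 t0. Qed.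

Let snorm_ratio_le (a b : nat -> K) c n : 0 < c -> (forall i, (0 < i)%N -> a i != 0) ->
  c * wprod (fun i => snorm (b i)) 0 n <= wprod (fun i => snorm (a i)) 0 n ->
  snorm (wprod b 0 n / wprod a 0 n) <= c^-1.
Proof.
move=> c0 a_neq0 le_ba.
have a_gt0 : 0 < snorm (wprod a 0 n) by rewrite lt_def snorm_eq0 wprod_neq0 // snorm_ge0.
by rewrite snormM snormV ler_pdivrMr // ler_pdivlMl // !snorm_wprod.
Qed.

Lemma wshift_similar : ops_similar Bu Bv.
Proof.
pose d n := wprod v 0 n / wprod u 0 n.
pose d' n := wprod u 0 n / wprod v 0 n.
have dK n : d n * d' n = 1.
  by rewrite /d /d' mulrA divfK ?mulfV ?wprod_neq0.
have d'K n : d' n * d n = 1 by rewrite mulrC dK.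
have d_le n : snorm (d n) <= c1^-1 := snorm_ratio_le c1_gt0 u_neq0 (le_vu n).
have d'_le n : snorm (d' n) <= c2^-1 := snorm_ratio_le c2_gt0 v_neq0 (le_uv n).
exists (diag_op p_gt0 d_le), (diag_op p_gt0 d'_le); split.
- exact: diag_op_bounded.
- exact: diag_op_bounded.
- by move=> x; apply: lp_ext => k /=; rewrite mulrA d'K mul1r.
- by move=> x; apply: lp_ext => k /=; rewrite mulrA dK mul1r.
move=> x; apply: lp_ext => k /=; rewrite wshift_u wshift_v /=.
have [Pu Pv] := (wprod_neq0 0 k u_neq0, wprod_neq0 0 k v_neq0).
by rewrite /d /d' !wprodSr add0n diag_conj_identity ?v_neq0.
Qed.

End wshift_similar.

Theorem corollary3p11 (R : realType) (cplx : bool) (p : R) (hp : 1 <= p)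
    (u v : nat -> scal R cplx)
    (hu0 : forall n, (0 < n)%N -> u n != 0)
    (hv0 : forall n, (0 < n)%N -> v n != 0)
    (hubd : exists M : R, forall n, (0 < n)%N -> snorm (u n) <= M)
    (hvbd : exists M : R, forall n, (0 < n)%N -> snorm (v n) <= M)
    (huinf : exists2 c : R, 0 < c & forall n, (0 < n)%N -> c <= snorm (u n))
    (hvinf : exists2 c : R, 0 < c & forall n, (0 < n)%N -> c <= snorm (v n))
    (Bu Bv : lp cplx p -> lp cplx p)
    (hBu : is_wshift u Bu) (hBv : is_wshift v Bv) :
  ~ ops_similar Bu Bv -> ops_orthogonal Bu Bv.
Proof.
move=> not_similar m1 m2 m1_inv m2_inv m1_0 m2_0.
have p_gt0 : 0 < p := lt_le_trans ltr01 hp.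
have [[Mu le_Mu] [Mv le_Mv]] := (hubd, hvbd).
have [[cu cu_gt0 cu_le] [cv cv_gt0 cv_le]] := (huinf, hvinf).
pose U := wprod (fun i => snorm (u i)); pose V := wprod (fun i => snorm (v i)).
have [UV|/not_inf_ratio_eq0[c1 c1_gt0 le_VU]] := pselect (inf_ratio_eq0 (U 0%N) (V 0%N)).
  apply: (wshift_mutually_singular p_gt0 hBu hBv _ m1_inv m2_inv m1_0).
  exact: (wprod_ratio_uniform cu_gt0 cu_le le_Mu cv_gt0 cv_le le_Mv UV).
have [VU|/not_inf_ratio_eq0[c2 c2_gt0 le_UV]] := pselect (inf_ratio_eq0 (V 0%N) (U 0%N)).
  apply/mutually_singular_sym/(wshift_mutually_singular p_gt0 hBv hBu _ m2_inv m1_inv m2_0).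
  exact: (wprod_ratio_uniform cv_gt0 cv_le le_Mv cu_gt0 cu_le le_Mu VU).
by case: not_similar; exact: (wshift_similar p_gt0 hBu hBv hu0 hv0 c1_gt0 c2_gt0 le_VU le_UV).
Qed.
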